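(* Let $G$ be a finite abelian group, $M$ a finite category, and $V\in\mathrm{Fun}(M,\mathrm{Vect}_{\hat G})$ indecomposable. Then every endomorphism $V\to V$ (natural transformation) is either nilpotent or an isomorphism.
   Context: $\hat G=G\sqcup\{0\}$ with $0$ absorbing. $\mathrm{Vect}_{\hat G}$: objects are finite pointed sets with an action of $\hat G$ ($0v=0$, $g0=0$) such that $G$ acts freely on nonzero elements; morphisms $f$ satisfy $f(0)=0$, $f(gv)=gf(v)$, and $f(v_1)=f(v_2)\neq0\Rightarrow Gv_1=Gv_2$. Direct sum $V\oplus W$ is disjoint union with zeros identified; in $\mathrm{Fun}(M,\mathrm{Vect}_{\hat G})$ (functors and natural transformations), subobjects and direct sums are formed pointwise. A finite category has finitely many objects and morphisms. $V$ is indecomposable if $V\neq0$ and $V=V_1\oplus V_2$ (for subfunctors $V_1,V_2$) implies $V_1=0$ or $V_2=0$. A natural transformation $N:V\to V$ is nilpotent if $N^m$ is the zero transformation for some $m\in\mathbb N$. *)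

From mathcomp Require Import all_boot all_fingroup.
Unset Printing Implicit Defensive.
Local Open Scope group_scope.

Record FinCat := {
  Ob : finType;
  Hom : Ob -> Ob -> finType;
  cid : forall a, Hom a a;
  ccomp : forall a b c, Hom b c -> Hom a b -> Hom a c;
  ccompA : forall a b c d (h : Hom c d) (g : Hom b c) (f : Hom a b),
      ccomp _ _ _ h (ccomp _ _ _ g f) = ccomp _ _ _ (ccomp _ _ _ h g) f;
  ccomp1f : forall a b (f : Hom a b), ccomp _ _ _ (cid b) f = f;
  ccompf1 : forall a b (f : Hom a b), ccomp _ _ _ f (cid a) = f
}.

(* A functor M -> Vect_{\hat G}.  Each object is sent to a finite pointed set
   (fobj a, fzero a) with an action of \hat G = G ⊔ {0}: the action of g ∈ G is
   fact a g, and 0 ∈ \hat G acts as the constant map to the base point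
   (so 0v = 0 holds by definition); g0 = 0; G acts freely on nonzero elements.
   Morphisms are maps of Vect_{\hat G}. *)
Record GFunctor (gT : finGroupType) (M : FinCat) := {
  fobj : Ob M -> finType;
  fzero : forall a, fobj a;
  fact : forall a, gT -> fobj a -> fobj a;
  fmap : forall a b, Hom M a b -> fobj a -> fobj b;
  fact1 : forall a v, fact a 1 v = v;
  factM : forall a g h v, fact a (g * h) v = fact a g (fact a h v);
  fact0 : forall a g, fact a g (fzero a) = fzero a;
  fact_free : forall a g v, v != fzero a -> fact a g v = v -> g = 1;
  fmap0 : forall a b (f : Hom M a b), fmap a b f (fzero a) = fzero b;
  fmap_act : forall a b (f : Hom M a b) g v, fmap a b f (fact a g v) = fact b g (fmap a b f v);
  fmap_orbit : forall a b (f : Hom M a b) v1 v2,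
      fmap a b f v1 = fmap a b f v2 -> fmap a b f v1 != fzero b ->
      exists g, v1 = fact a g v2;
  fmap_id : forall a v, fmap a a (cid M a) v = v;
  fmap_comp : forall a b c (g : Hom M b c) (f : Hom M a b) v,
      fmap _ _ (ccomp M _ _ _ g f) v = fmap _ _ g (fmap _ _ f v)
}.
Arguments cid {_} _.
Arguments ccomp {_ _ _ _}.
Arguments Hom {_} _ _.
Arguments fobj {_ _} _ _.
Arguments fzero {_ _} _ _.
Arguments fact {_ _} _ _ _ _.
Arguments fmap {_ _} _ {_ _} _ _.

Set Implicit Arguments. Unset Strict Implicit.
Section Defs.
Variables (gT : finGroupType) (M : FinCat) (V : GFunctor gT M).

(* A subfunctor: pointwise a subobject in Vect_{\hat G} (a G-stable subset
   containing 0; the inclusion is then a morphism), stable under V(f). *)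
Definition is_subfunctor (S : forall a, {set fobj V a}) : Prop :=
  [/\ forall a, fzero V a \in S a,
      forall a g v, v \in S a -> fact V a g v \in S a &
      forall a b (f : Hom a b) v, v \in S a -> fmap V f v \in S b].

Definition is_zero_sub (S : forall a, {set fobj V a}) : Prop :=
  forall a, S a = [set fzero V a].

(* V = S1 ⊕ S2 (internal direct sum, pointwise): the canonical map from the
   disjoint union with zeros identified is a bijection. *)
Definition is_direct_sum (S1 S2 : forall a, {set fobj V a}) : Prop :=
  forall a, S1 a :|: S2 a = [set: fobj V a] /\ S1 a :&: S2 a = [set fzero V a].

Definition nonzero_functor : Prop := exists a (v : fobj V a), v != fzero V a.

Definition indecomposable : Prop :=
  nonzero_functor /\
  forall S1 S2, is_subfunctor S1 -> is_subfunctor S2 -> is_direct_sum S1 S2 ->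
    is_zero_sub S1 \/ is_zero_sub S2.

(* A natural transformation V -> V whose components are morphisms of
   Vect_{\hat G}. *)
Definition is_endo (N : forall a, fobj V a -> fobj V a) : Prop :=
  [/\ forall a, N a (fzero V a) = fzero V a,
      forall a g v, N a (fact V a g v) = fact V a g (N a v),
      forall a v1 v2, N a v1 = N a v2 -> N a v1 != fzero V a ->
        exists g, v1 = fact V a g v2 &
      forall a b (f : Hom a b) v, N b (fmap V f v) = fmap V f (N a v)].

Definition nilpotent (N : forall a, fobj V a -> fobj V a) : Prop :=
  exists m : nat, forall a v, iter m (N a) v = fzero V a.

Definition is_iso (N : forall a, fobj V a -> fobj V a) : Prop :=
  exists N', is_endo N' /\
    (forall a v, N' a (N a v) = v) /\ (forall a v, N a (N' a v) = v).

End Defs.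

(** Fitting's lemma.  For n bounding the sizes of all the sets V(a), the
    iterate E := N^(n!) is an idempotent endomorphism, since every orbit of N
    enters a cycle within n steps and the length of that cycle divides n!.
    For an idempotent endomorphism E, V is the direct sum of the subfunctors
    ker E and im E: if E v <> 0 then E v = E (E v) and the orbit condition on E
    gives v = g (E v) = E (g v).  By indecomposability either im E = 0, i.e. N
    is nilpotent, or ker E = 0; then ker N = 0, so by freeness of the action
    each N(a) is injective, hence bijective on the finite set V(a), and its
    inverse is again an endomorphism. *)

From Pilot Require Import Defs.
From mathcomp Require Import all_boot all_fingroup.

Set Implicit Arguments.
Unset Strict Implicit.
Unset Printing Implicit Defensive.

Lemma iter_add_mul_period (T : Type) (f : T -> T) x i d j k :
  i <= j -> iter (i + d) f x = iter i f x -> iter (j + k * d) f x = iter j f x.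
Proof.
move=> le_ij per_d; rewrite -(subnK le_ij) -addnA iterD [RHS]iterD.
congr (iter _ f _).
elim: k => [|k IHk]; first by rewrite mul0n addn0.
by rewrite mulSn addnCA iterD IHk -iterD addnC per_d.
Qed.

Lemma iter_fact_idem (T : finType) (f : T -> T) n x :
  #|T| <= n -> iter n`! f (iter n`! f x) = iter n`! f x.
Proof.
move=> le_Tn; have /trajectP[i lt_ip per] := looping_order f x.
have le_pn : fingraph.order f x <= n by apply: leq_trans (max_card _) le_Tn.
have le_in : i <= n`!.
  by rewrite (leq_trans (ltnW lt_ip)) ?(leq_trans le_pn) ?fact_geq.
have /dvdnP[q def_nfact] : fingraph.order f x - i %| n`!.
  by rewrite dvdn_fact // subn_gt0 lt_ip (leq_trans (leq_subr _ _)).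
rewrite -iterD {2}def_nfact (iter_add_mul_period q le_in) //.
by rewrite subnKC // ltnW.
Qed.

Section Endomorphisms.

Variables (gT : finGroupType) (M : FinCat) (V : GFunctor gT M).
Implicit Types N E : forall a, fobj V a -> fobj V a.

Lemma is_endo_id : is_endo (fun a => @id (fobj V a)).
Proof. by split=> // a v1 v2 -> _; exists 1%g; rewrite Defs.fact1. Qed.

Lemma is_endo_comp N1 N2 :
  is_endo N1 -> is_endo N2 -> is_endo (fun a => N1 a \o N2 a).
Proof.
case=> N1_0 N1_act N1_orb N1_map [N2_0 N2_act N2_orb N2_map].
split=> [a | a g v | a v1 v2 /= Ev nz_v | a b f v] /=.
- by rewrite N2_0 N1_0.
- by rewrite N2_act N1_act.
- have nz_N2v1 : N2 a v1 != fzero V a.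
    by apply: contraNneq nz_v => ->; rewrite N1_0.
  have [h Eh] := N1_orb a _ _ Ev nz_v.
  have Ev2 : N2 a v1 = N2 a (fact V a h v2) by rewrite N2_act.
  have [g ->] := N2_orb a v1 (fact V a h v2) Ev2 nz_N2v1.
  by exists (g * h)%g; rewrite factM.
- by rewrite N2_map N1_map.
Qed.

Lemma is_endo_iter N k : is_endo N -> is_endo (fun a => iter k (N a)).
Proof.
move=> endoN; elim: k => [|k IHk]; first exact: is_endo_id.
exact: is_endo_comp endoN IHk.
Qed.

Definition endo_ker N a := [set v | N a v == fzero V a].
Definition endo_im N a := [set N a v | v : fobj V a].

Lemma is_subfunctor_ker N : is_endo N -> is_subfunctor (endo_ker N).
Proof.
case=> N0 N_act _ N_map; split=> [a | a g v | a b f v]; rewrite !inE.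
- by rewrite N0.
- by rewrite N_act => /eqP->; rewrite Defs.fact0.
- by rewrite N_map => /eqP->; rewrite fmap0.
Qed.

Lemma is_subfunctor_im N : is_endo N -> is_subfunctor (endo_im N).
Proof.
case=> N0 N_act _ N_map.
split=> [a | a g _ /imsetP[v _ ->] | a b f _ /imsetP[v _ ->]].
- by rewrite -N0 imset_f.
- by rewrite -N_act imset_f.
- by rewrite -N_map imset_f.
Qed.

Lemma is_direct_sum_ker_im E :
  is_endo E -> (forall a v, E a (E a v) = E a v) ->
  is_direct_sum (endo_ker E) (endo_im E).
Proof.
case=> E0 E_act E_orb _ idemE a; split; apply/setP=> v.
  rewrite !inE; have [//= | nz_Ev] := eqP.
  have [g ->] := E_orb a v (E a v) (esym (idemE a v)) (introN eqP nz_Ev).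
  by rewrite -E_act imset_f.
rewrite !inE; apply/andP/eqP=> [[/eqP Ev0 /imsetP[u _ Eu]] | ->].
  by rewrite Eu -idemE -Eu.
by rewrite E0 eqxx -E0 imset_f.
Qed.

Lemma is_zero_sub_ker_iter N k :
  is_endo N -> 0 < k -> is_zero_sub (endo_ker (fun a => iter k (N a))) ->
  is_zero_sub (endo_ker N).
Proof.
move=> endoN k_gt0 ker0 a; have [N0 _ _ _] := endoN.
apply/setP=> v; rewrite !inE.
apply/idP/idP=> [/eqP Nv0 | /eqP->]; last by rewrite N0.
have : v \in endo_ker (fun a => iter k (N a)) a.
  rewrite inE -(prednK k_gt0) iterSr Nv0.
  by have [-> _ _ _] := is_endo_iter k.-1 endoN.
by rewrite ker0 inE.
Qed.

Lemma ker0_endo_inj N :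
  is_endo N -> is_zero_sub (endo_ker N) -> forall a, injective (N a).
Proof.
case=> _ N_act N_orb _ ker0 a v1 v2 Ev.
have [Nv1_0 | nz_Nv1] := eqVneq (N a v1) (fzero V a).
  have : (v1 \in endo_ker N a) && (v2 \in endo_ker N a).
    by rewrite !inE -Ev Nv1_0 eqxx.
  by rewrite ker0 !inE => /andP[/eqP-> /eqP->].
have [g Eg] := N_orb a v1 v2 Ev nz_Nv1.
suff g1 : g = 1%g by rewrite Eg g1 Defs.fact1.
apply: (@fact_free _ _ V a g (N a v2)); first by rewrite -Ev.
by rewrite -N_act -Eg.
Qed.

Lemma is_iso_inj N : is_endo N -> (forall a, injective (N a)) -> is_iso N.
Proof.
case=> N0 N_act _ N_map injN.
exists (fun a => invF (injN a)).
split; last by split=> a v; [apply: invF_f | apply: f_invF].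
split=> [a | a g v | a v1 v2 Ev _ | a b f v].
- by apply: (injN a); rewrite f_invF N0.
- by apply: (injN a); rewrite f_invF N_act f_invF.
- by exists 1%g; rewrite Defs.fact1 -(f_invF (injN a) v1) Ev f_invF.
- by apply: (injN b); rewrite f_invF N_map f_invF.
Qed.

End Endomorphisms.

Theorem mainTheorem5 (gT : finGroupType) (M : FinCat) (V : GFunctor gT M) :
  abelian [set: gT] -> indecomposable V ->
  forall N : forall a, fobj V a -> fobj V a,
    is_endo N -> nilpotent N \/ is_iso N.
Proof.
move=> _ [_ indecV] N endoN.
pose n := \max_(a : Ob M) #|fobj V a|.
pose E a := iter n`! (N a).
have endoE : is_endo E := is_endo_iter n`! endoN.
have idemE a v : E a (E a v) = E a v.
  by apply: iter_fact_idem; exact: (@leq_bigmax _ (fun a => #|fobj V a|) a).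
have [ker0 | im0] := indecV _ _ (is_subfunctor_ker endoE)
  (is_subfunctor_im endoE) (is_direct_sum_ker_im endoE idemE).
  right; apply: is_iso_inj => //; apply: ker0_endo_inj => //.
  exact: is_zero_sub_ker_iter endoN (fact_gt0 n) ker0.
left; exists n`! => a v; apply/set1P; rewrite -im0; exact: imset_f.
Qed.
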